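(* Let $B_1,\dots,B_D$ be resonator blocks and define $\Sigma=\bigcup_{\chi_+\in\{1,\dots,D\}^{\mathbb{Z}_{\ge0}}}\big(\sigma(\mathcal{J}_+(\chi_+))\cup\sigma(\mathcal{J}_-(\chi_+))\big)$. Let $M\in\mathbb{N}$ and $\chi_M\in\{1,\dots,D\}^M$, and let $V,C\in\mathbb{R}^{N\times N}$ be the material and capacitance matrices of the finite resonator array determined by $\chi_M$. Then $\sigma(VC)\subset\Sigma$.
   Context: A resonator block $B_d$ is a finite sequence of $\mathrm{len}(B_d)\ge1$ triples $(v_k,\ell_k,s_k)$ of positive reals (wave speed, length, spacing to the next resonator). The finite array of $\chi_M$ is the concatenation $B_{\chi_M(1)},\dots,B_{\chi_M(M)}$, giving $N$ resonators with parameters $(v_i,\ell_i,s_i)_{i=1}^N$. Then $V=\mathrm{diag}(v_1^2/\ell_1,\dots,v_N^2/\ell_N)$ and $C$ is the symmetric tridiagonal matrix with $C_{i,i+1}=C_{i+1,i}=-1/s_i$ ($1\le i\le N-1$), $C_{11}=1/s_1$, $C_{NN}=1/s_{N-1}$, $C_{ii}=1/s_{i-1}+1/s_i$ for $2\le i\le N-1$. For a resonator sequence set $a^{(i)}=-\frac{v_iv_{i+1}}{s_i\sqrt{\ell_i\ell_{i+1}}}$, $b^{(i)}=\frac{v_i^2}{\ell_i}(\frac1{s_{i-1}}+\frac1{s_i})$. $\mathcal{J}_+(\chi_+)$: resonators indexed by $i\ge0$ obtained by concatenating $B_{\chi_+(0)},B_{\chi_+(1)},\dots$; operator on $\ell^2(\mathbb{Z}_{\ge0})$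 with $(\mathcal{J}_+\mathbf{v})^{(i)}=a^{(i-1)}\mathbf{v}^{(i-1)}+a^{(i)}\mathbf{v}^{(i+1)}+b^{(i)}\mathbf{v}^{(i)}$ for $i\ge1$ and $(\mathcal{J}_+\mathbf{v})^{(0)}=a^{(0)}\mathbf{v}^{(1)}+\frac{v_0^2}{\ell_0s_0}\mathbf{v}^{(0)}$. $\mathcal{J}_-(\chi_+)$: resonators indexed by $i\le-1$ obtained by placing blocks $\dots,B_{\chi_+(1)},B_{\chi_+(0)}$ left to right (each block internally in original order, last resonator of $B_{\chi_+(0)}$ at index $-1$); operator on $\ell^2(\mathbb{Z}_{<0})$ given by the bulk formula for $i\le-2$ and $(\mathcal{J}_-\mathbf{v})^{(-1)}=a^{(-2)}\mathbf{v}^{(-2)}+\frac{v_{-1}^2}{\ell_{-1}s_{-2}}\mathbf{v}^{(-1)}$. *)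

From Stdlib Require Import Reals List ZArith Arith Lia Lra.
From Coquelicot Require Import Coquelicot.
Open Scope R_scope.

(* A resonator: ((wave speed v, length l), spacing s to the next resonator). *)
Definition res : Type := (R * R * R)%type.
Definition rv (r : res) : R := fst (fst r).
Definition rl (r : res) : R := snd (fst r).
Definition rs (r : res) : R := snd r.
Definition res0 : res := ((1, 1), 1).   (* dummy default, never reached *)

Definition pos_res (r : res) : Prop := 0 < rv r /\ 0 < rl r /\ 0 < rs r.

Definition valid_blocks (D : nat) (B : nat -> list res) : Prop :=
  forall d, (1 <= d <= D)%nat -> B d <> nil /\ List.Forall pos_res (B d).

Definition finite_array (B : nat -> list res) (chiM : list nat) : list res :=
  flat_map B chiM.

Definition resF (arr : list res) (i : nat) : res := nth (i - 1) arr res0.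

Definition Vmat (arr : list res) (i j : nat) : R :=
  if Nat.eqb i j then rv (resF arr i) ^ 2 / rl (resF arr i) else 0.

Definition Cmat (arr : list res) (i j : nat) : R :=
  let N := length arr in
  let s k := rs (resF arr k) in
  if Nat.eqb i j then
    (if Nat.eqb i 1 then 1 / s 1%nat
     else if Nat.eqb i N then 1 / s (N - 1)%nat
     else 1 / s (i - 1)%nat + 1 / s i)
  else if Nat.eqb j (S i) then - (1 / s i)
  else if Nat.eqb i (S j) then - (1 / s j)
  else 0.

Definition VCmat (arr : list res) (i j : nat) : R :=
  sum_n_m (fun k => Vmat arr i k * Cmat arr k j) 1 (length arr).

Definition eigenvalue_VC (arr : list res) (z : C) : Prop :=
  let N := length arr in
  exists x : nat -> C,
    (exists i, (1 <= i <= N)%nat /\ x i <> 0%C) /\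
    forall i, (1 <= i <= N)%nat ->
      sum_n_m (fun j => Cmult (RtoC (VCmat arr i j)) (x j)) 1 N = Cmult z (x i).

Definition coef_a (r : Z -> res) (i : Z) : R :=
  - (rv (r i) * rv (r (i + 1)%Z)) / (rs (r i) * sqrt (rl (r i) * rl (r (i + 1)%Z))).
Definition coef_b (r : Z -> res) (i : Z) : R :=
  rv (r i) ^ 2 / rl (r i) * (1 / rs (r (i - 1)%Z) + 1 / rs (r i)).

Definition plus_res (B : nat -> list res) (chi : nat -> nat) (i : Z) : res :=
  let n := Z.to_nat i in
  nth n (flat_map (fun j => B (chi j)) (seq 0 (S n))) res0.

(* Resonators of J_-(chi): ..., B_{chi 1}, B_{chi 0} left to right, last
   resonator of B_{chi 0} at index -1; index i <= -1. *)
Definition minus_res (B : nat -> list res) (chi : nat -> nat) (i : Z) : res :=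
  let n := Z.to_nat (- i - 1) in
  nth n (flat_map (fun j => rev (B (chi j))) (seq 0 (S n))) res0.

Definition Jplus (B : nat -> list res) (chi : nat -> nat) (x : nat -> C) (n : nat) : C :=
  let r := plus_res B chi in
  let i := Z.of_nat n in
  match n with
  | O => Cplus (Cmult (RtoC (coef_a r 0%Z)) (x 1%nat))
               (Cmult (RtoC (rv (r 0%Z) ^ 2 / (rl (r 0%Z) * rs (r 0%Z)))) (x 0%nat))
  | S m => Cplus (Cplus (Cmult (RtoC (coef_a r (i - 1)%Z)) (x m))
                        (Cmult (RtoC (coef_a r i)) (x (S n))))
                 (Cmult (RtoC (coef_b r i)) (x n))
  end.

(* J_- acting on sequences x : nat -> C, where x n = v^{(-(n+1))}
   (so index i = -(n+1); i-1 <-> n+1, i+1 <-> n-1). *)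
Definition Jminus (B : nat -> list res) (chi : nat -> nat) (x : nat -> C) (n : nat) : C :=
  let r := minus_res B chi in
  let i := (- Z.of_nat n - 1)%Z in
  match n with
  | O => Cplus (Cmult (RtoC (coef_a r (-2)%Z)) (x 1%nat))
               (Cmult (RtoC (rv (r (-1)%Z) ^ 2 / (rl (r (-1)%Z) * rs (r (-2)%Z)))) (x 0%nat))
  | S m => Cplus (Cplus (Cmult (RtoC (coef_a r (i - 1)%Z)) (x (S n)))
                        (Cmult (RtoC (coef_a r i)) (x m)))
                 (Cmult (RtoC (coef_b r i)) (x n))
  end.

Definition l2 (x : nat -> C) : Prop := ex_series (fun n => Cmod (x n) ^ 2).
Definition l2norm (x : nat -> C) : R := sqrt (Series (fun n => Cmod (x n) ^ 2)).

Definition resolvent (J : (nat -> C) -> (nat -> C)) (z : C) : Prop :=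
  exists K : R,
    (forall x, l2 x -> (forall n, Cminus (J x n) (Cmult z (x n)) = 0%C) ->
               forall n, x n = 0%C) /\
    (forall y, l2 y -> exists x, l2 x /\
        (forall n, Cminus (J x n) (Cmult z (x n)) = y n) /\
        l2norm x <= K * l2norm y).

Definition spectrum (J : (nat -> C) -> (nat -> C)) (z : C) : Prop :=
  ~ resolvent J z.

Definition Sigma (D : nat) (B : nat -> list res) (z : C) : Prop :=
  exists chi : nat -> nat,
    (forall n, (1 <= chi n <= D)%nat) /\
    (spectrum (Jplus B chi) z \/ spectrum (Jminus B chi) z).

From Stdlib Require Import Reals List ZArith Arith Lra Lia.
From Coquelicot Require Import Coquelicot.
Open Scope R_scope.

(* With e_i = v_i / sqrt l_i and E = diag(e_i) we have V = E^2, so VC is similar to E C E,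
   and J_+ and J_- are the half-infinite analogues of E C E.  An eigenvector x of VC solves
     e_i^2 [(x_i - x_{i-1}) / s_{i-1} + (x_i - x_{i+1}) / s_i] = z x_i   (1 <= i <= N),
   where the difference reaching beyond an end of the array is absent (Neumann ends).  Repeat chi_M
   periodically.  Because both ends are free, the sequence formed by the copies c^k x
   (k = 0, 1, ...), with c = x_N / x_1, solves the same equation on the whole half-line: the
   differences across the seams vanish.  Divided by e it is a formal eigenvector of J_+, and
   if |c| <= 1 its truncations are Weyl sequences, since the last block weighs |c|^(2K) while
   the first K + 1 blocks weigh at least (K + 1) |c|^(2K) |x_1|^2.  If |c| > 1 the same
   construction on the reversed array gives z in the spectrum of J_-.  A single resonator,
   whose C = (1/s_1) has no free ends, is covered by the solution (1, 0, -1) for three equal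
   resonators. *)

Lemma sum_n_m_zero_on {G : AbelianMonoid} (f : nat -> G) m n :
  (forall k, (m <= k <= n)%nat -> f k = zero) -> sum_n_m f m n = zero.
Proof.
  intros Hf. rewrite (sum_n_m_ext_loc _ (fun _ => zero)) by exact Hf.
  apply sum_n_m_const_zero.
Qed.

Lemma sum_n_m_three_point {G : AbelianMonoid} (f : nat -> G) i n :
  (1 <= i <= n)%nat ->
  (forall j, j <> pred i -> j <> i -> j <> S i -> f j = zero) ->
  sum_n_m f 1 n =
  plus (plus (if (i =? 1)%nat then zero else f (pred i)) (f i))
       (if (i =? n)%nat then zero else f (S i)).
Proof.
  intros Hi Hf.
  rewrite (sum_n_m_Chasles f 1 (pred i) n) by lia.
  replace (S (pred i)) with i by lia.
  rewrite (sum_Sn_m f i n), plus_assoc by lia.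
  f_equal; [f_equal|].
  - destruct i as [|[|i]]; [lia | apply sum_n_m_zero; lia |]. simpl pred.
    rewrite sum_n_Sm by lia.
    rewrite sum_n_m_zero_on by (intros k Hk; apply Hf; lia).
    apply plus_zero_l.
  - destruct (Nat.eqb_spec i n) as [->|Hin]; [apply sum_n_m_zero; lia|].
    rewrite sum_Sn_m by lia.
    rewrite (sum_n_m_zero_on f (S (S i))) by (intros k Hk; apply Hf; lia).
    apply plus_zero_r.
Qed.

Lemma sum_n_last {G : AbelianMonoid} (a : nat -> G) n :
  (forall k, (k < n)%nat -> a k = zero) -> sum_n a n = a n.
Proof.
  induction n as [|n IH]; intros Ha; [apply sum_O|].
  rewrite sum_Sn, IH by (intros; apply Ha; lia).
  rewrite (Ha n) by lia. apply plus_zero_l.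
Qed.

Lemma sum_n_m_ge_first (a : nat -> R) m n :
  (forall k, 0 <= a k) -> (m <= n)%nat -> a m <= sum_n_m a m n.
Proof.
  intros Ha Hmn. rewrite sum_Sn_m by exact Hmn.
  assert (0 <= sum_n_m a (S m) n).
  { apply Rle_trans with (sum_n_m (fun _ => 0) (S m) n); [|now apply sum_n_m_le].
    rewrite sum_n_m_const; lra. }
  unfold plus; simpl; lra.
Qed.

(* The blocks have length [S P]; [K * S P + P] is the last index of block [K]. *)
Lemma sum_n_stride_ge (a : nat -> R) P K m :
  (forall n, 0 <= a n) -> (forall k, (k <= K)%nat -> m <= a (k * S P)%nat) ->
  INR (S K) * m <= sum_n a (K * S P + P).
Proof.
  intros Ha. induction K as [|K IH]; intros Hm.
  - specialize (Hm O (le_n O)). simpl in *. apply Rle_trans with (a O); [lra|].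
    now apply sum_n_m_ge_first; [|lia].
  - unfold sum_n. rewrite (sum_n_m_Chasles a 0 (K * S P + P)) by lia.
    rewrite S_INR, Rmult_plus_distr_r, Rmult_1_l.
    apply Rplus_le_compat; [apply IH; intros; apply Hm; lia|].
    replace (S (K * S P + P)) with (S K * S P)%nat by lia.
    apply Rle_trans with (a (S K * S P)%nat); [apply Hm; lia|].
    apply sum_n_m_ge_first; [exact Ha | lia].
Qed.

Lemma pow_le_1_antimono (x : R) m n : 0 <= x <= 1 -> (m <= n)%nat -> x ^ n <= x ^ m.
Proof.
  intros Hx Hmn. replace n with (m + (n - m))%nat by lia. rewrite pow_add.
  assert (x ^ (n - m) <= 1) by (rewrite <- (pow1 (n - m)); now apply pow_incr).
  assert (0 <= x ^ m) by (apply pow_le; lra). nra.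
Qed.

Lemma is_series_finite_support {V : NormedModule R_AbsRing} (a : nat -> V) n0 :
  (forall n, (n0 < n)%nat -> a n = zero) -> is_series a (sum_n a n0).
Proof.
  intros Ha. apply (filterlim_ext_loc (fun _ => sum_n a n0)); [|apply filterlim_const].
  exists n0. intros n Hn. induction Hn as [|n Hn IH]; [reflexivity|].
  rewrite sum_Sn, Ha, plus_zero_r by lia. exact IH.
Qed.

Lemma is_series_Cmod2_finite_support (w : nat -> C) n0 :
  (forall n, (n0 < n)%nat -> w n = 0%C) ->
  is_series (fun n => Cmod (w n) ^ 2) (sum_n (fun n => Cmod (w n) ^ 2) n0).
Proof.
  intros Hw. apply (is_series_finite_support (V := R_NormedModule)). intros n Hn.
  rewrite Hw, Cmod_0 by exact Hn. unfold zero; simpl. ring.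
Qed.

Lemma RtoC_neq_0 (x : R) : x <> 0 -> RtoC x <> 0%C.
Proof. intros Hx E. apply Hx. exact (f_equal fst E). Qed.

Ltac push_RtoC :=
  repeat first [ rewrite RtoC_plus | rewrite RtoC_minus | rewrite RtoC_opp
               | rewrite RtoC_mult | rewrite RtoC_pow | rewrite RtoC_div by auto ].

(** * Weyl sequences *)

Lemma spectrum_of_weyl_sequences (J : (nat -> C) -> nat -> C) (z : C) :
  (forall x w n, J (fun k => x k - w k)%C n = (J x n - J w n)%C) ->
  (forall eps, 0 < eps -> exists (w : nat -> C) (N M : nat),
      (forall n, (N < n)%nat -> w n = 0%C) /\
      (forall n, (M < n)%nat -> (J w n - z * w n)%C = 0%C) /\
      0 < sum_n (fun n => Cmod (w n) ^ 2) N /\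
      sum_n (fun n => Cmod (J w n - z * w n)%C ^ 2) M
        <= eps * sum_n (fun n => Cmod (w n) ^ 2) N) ->
  spectrum J z.
Proof.
  intros Hlin Hweyl [K [Hinj Hsurj]].
  (* A bounded inverse forces |w|^2 <= K^2 |(J - z) w|^2 for finitely supported w. *)
  destruct (Hweyl (/ (2 * (K ^ 2 + 1)))) as [w [N [M [Hw [Hr [Hpos Hle]]]]]].
  { apply Rinv_0_lt_compat. nra. }
  set (r := fun n => (J w n - z * w n)%C) in *.
  set (Sw := sum_n (fun n => Cmod (w n) ^ 2) N) in *.
  set (Sr := sum_n (fun n => Cmod (r n) ^ 2) M) in *.
  assert (Ew := is_series_Cmod2_finite_support w N Hw).
  assert (Er := is_series_Cmod2_finite_support r M Hr).
  destruct (Hsurj r (ex_intro _ _ Er)) as [x [Hx [Hxr Hbound]]].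
  assert (Hxw : forall n, x n = w n).
  { assert (Hl2 : l2 (fun n => x n - w n)%C).
    { apply (ex_series_incr_n _ (S N)). apply (ex_series_incr_n _ (S N)) in Hx.
      eapply ex_series_ext; [|exact Hx]. intros n; simpl.
      rewrite (Hw (S (N + n))) by lia. unfold Cminus. now rewrite Copp_0, Cplus_0_r. }
    intros n. apply Ceq_minus. revert n. apply (Hinj _ Hl2). intros n.
    rewrite Hlin. transitivity ((J x n - z * x n) - r n)%C; [unfold r; ring|].
    rewrite Hxr. ring. }
  unfold l2norm in Hbound.
  rewrite (Series_ext _ (fun n => Cmod (w n) ^ 2)) in Hbound by (intros; now rewrite Hxw).
  rewrite (is_series_unique _ _ Ew), (is_series_unique _ _ Er) in Hbound.
  assert (HSr : 0 <= Sr).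
  { apply Rle_trans with (sum_n (fun _ => 0) M); [rewrite sum_n_const; lra|].
    apply sum_n_m_le. intros; apply pow2_ge_0. }
  assert (HSw : Sw <= K ^ 2 * Sr).
  { rewrite <- (pow2_sqrt Sw), <- (pow2_sqrt Sr) by lra.
    rewrite <- Rpow_mult_distr. apply pow_incr. split; [apply sqrt_pos | exact Hbound]. }
  assert (HK : K ^ 2 * / (2 * (K ^ 2 + 1)) < 1).
  { apply (Rmult_lt_reg_r (2 * (K ^ 2 + 1))); [nra|].
    rewrite Rmult_assoc, Rinv_l by nra. nra. }
  assert (K ^ 2 * Sr <= K ^ 2 * (/ (2 * (K ^ 2 + 1)) * Sw))
    by (apply Rmult_le_compat_l; [apply pow2_ge_0 | exact Hle]).
  nra.
Qed.

(* [is_jacobi e g J]: J is the symmetrised capacitance operator E C E with weights [e] and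
   spacings [g]; with [e = sqrtV] the coefficients are the a^(i) and b^(i) of J_+. *)
Definition jacobi_offdiag (e g : nat -> R) (n : nat) : R := - (e n * e (S n)) / g n.

Definition jacobi_diag (e g : nat -> R) (n : nat) : R :=
  match n with
  | O => e O ^ 2 / g O
  | S m => e (S m) ^ 2 * (1 / g m + 1 / g (S m))
  end.

Definition is_jacobi (e g : nat -> R) (J : (nat -> C) -> nat -> C) : Prop :=
  forall x n, J x n =
    ((match n with O => 0 | S m => RtoC (jacobi_offdiag e g m) * x m end)
     + RtoC (jacobi_offdiag e g n) * x (S n) + RtoC (jacobi_diag e g n) * x n)%C.

Lemma is_jacobi_linear e g J : is_jacobi e g J ->
  forall x w n, J (fun k => x k - w k)%C n = (J x n - J w n)%C.
Proof. intros HJ x w [|n]; rewrite !HJ; ring. Qed.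

Definition truncate (u : nat -> C) (n0 n : nat) : C := if (n <=? n0)%nat then u n else 0%C.

Lemma jacobi_truncate_residual e g J u z n0 :
  is_jacobi e g J -> (forall n, J u n = (z * u n)%C) ->
  forall n, (J (truncate u n0) n - z * truncate u n0 n)%C =
    if (n =? n0)%nat then (- RtoC (jacobi_offdiag e g n0) * u (S n0))%C
    else if (n =? S n0)%nat then (RtoC (jacobi_offdiag e g n0) * u n0)%C else 0%C.
Proof.
  intros HJ Hu n. pose proof (Hu n) as Hn. rewrite HJ in Hn |- *. unfold truncate.
  destruct n as [|m];
    repeat match goal with |- context [(?a <=? ?b)%nat] => destruct (Nat.leb_spec a b) end;
    repeat match goal with |- context [(?a =? ?b)%nat] =>
      let E := fresh "E" in destruct (Nat.eqb_spec a b) as [E|E]; try injection E as E end;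
    try lia; subst; try rewrite <- Hn; ring.
Qed.

Lemma spectrum_of_truncations e g J z u :
  is_jacobi e g J -> (forall n, J u n = (z * u n)%C) ->
  (forall eps, 0 < eps -> exists n0,
      0 < sum_n (fun n => Cmod (u n) ^ 2) n0 /\
      jacobi_offdiag e g n0 ^ 2 * (Cmod (u n0) ^ 2 + Cmod (u (S n0)) ^ 2)
        <= eps * sum_n (fun n => Cmod (u n) ^ 2) n0) ->
  spectrum J z.
Proof.
  intros HJ Hu Hsmall. apply (spectrum_of_weyl_sequences _ _ (is_jacobi_linear _ _ _ HJ)).
  intros eps Heps. destruct (Hsmall eps Heps) as [n0 [Hpos Hle]].
  assert (Hres := jacobi_truncate_residual _ _ _ _ _ n0 HJ Hu).
  assert (Hw : sum_n (fun n => Cmod (truncate u n0 n) ^ 2) n0 = sum_n (fun n => Cmod (u n) ^ 2) n0).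
  { apply sum_n_ext_loc. intros n Hn. unfold truncate. now rewrite (proj2 (Nat.leb_le _ _) Hn). }
  exists (truncate u n0), n0, (S n0). repeat split.
  - intros n Hn. unfold truncate. now rewrite (proj2 (Nat.leb_gt _ _) Hn).
  - intros n Hn. rewrite Hres.
    rewrite (proj2 (Nat.eqb_neq _ _)), (proj2 (Nat.eqb_neq _ _)) by lia. reflexivity.
  - now rewrite Hw.
  - rewrite Hw, sum_Sn, sum_n_last.
    + rewrite !Hres, Nat.eqb_refl, (proj2 (Nat.eqb_neq (S n0) n0)), Nat.eqb_refl by lia.
      rewrite !Cmod_mult, Cmod_opp, Cmod_R, !Rpow_mult_distr, pow2_abs.
      change (plus ?a ?b) with (Rplus a b). lra.
    + intros k Hk. rewrite Hres, (proj2 (Nat.eqb_neq _ _)), (proj2 (Nat.eqb_neq _ _)) by lia.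
      rewrite Cmod_0. unfold zero; simpl. ring.

Qed.

Lemma geometric_truncation_small (u : nat -> C) (c : C) P h eps :
  Cmod c <= 1 -> u O <> 0%C -> 0 < eps ->
  (forall k i, (i <= P)%nat -> u (k * S P + i)%nat = (c ^ k * u i)%C) ->
  exists K, 0 < sum_n (fun n => Cmod (u n) ^ 2) (K * S P + P) /\
    h ^ 2 * (Cmod (u (K * S P + P)%nat) ^ 2 + Cmod (u (S (K * S P + P))) ^ 2)
      <= eps * sum_n (fun n => Cmod (u n) ^ 2) (K * S P + P).
Proof.
  intros Hc Hu0 Heps Hu.
  set (rho := Cmod c). assert (Hrho : 0 <= rho <= 1) by (split; [apply Cmod_ge_0 | exact Hc]).
  set (m0 := Cmod (u O) ^ 2). assert (Hm0 : 0 < m0) by (apply pow_lt, Cmod_gt_0, Hu0).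
  set (A := Cmod (u P) ^ 2 + m0).
  assert (HA : 0 <= A) by (assert (0 <= Cmod (u P) ^ 2) by apply pow2_ge_0; unfold A; lra).
  destruct (INR_unbounded (h ^ 2 * A / (eps * m0))) as [K HK].
  assert (HKbig : h ^ 2 * A <= eps * (INR (S K) * m0)).
  { rewrite S_INR. apply Rle_trans with (h ^ 2 * A / (eps * m0) * (eps * m0)).
    - right. field. lra.
    - assert (0 < eps * m0) by nra. nra. }
  assert (Hmod : forall k i, (i <= P)%nat ->
                 Cmod (u (k * S P + i)%nat) ^ 2 = (rho ^ k) ^ 2 * Cmod (u i) ^ 2).
  { intros k i Hi. rewrite Hu, Cmod_mult, Cmod_pow by exact Hi. fold rho. ring. }
  assert (HrK : 0 <= (rho ^ K) ^ 2) by apply pow2_ge_0.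
  set (a := fun n => Cmod (u n) ^ 2).
  assert (Ha : forall n, 0 <= a n) by (intros; apply pow2_ge_0).
  assert (Hsum : INR (S K) * ((rho ^ K) ^ 2 * m0) <= sum_n a (K * S P + P)).
  { apply sum_n_stride_ge; [exact Ha|]. intros k Hk. unfold a.
    rewrite <- (Nat.add_0_r (k * S P)), Hmod by lia. fold m0. apply Rmult_le_compat_r; [lra|].
    apply pow_incr. split; [apply pow_le; lra | now apply pow_le_1_antimono]. }
  exists K. split.
  - apply Rlt_le_trans with (a O); [exact Hm0 | now apply sum_n_m_ge_first; [|lia]].
  - replace (S (K * S P + P)) with (S K * S P + 0)%nat by lia. rewrite !Hmod by lia.
    assert (rho ^ S K <= rho ^ K) by (apply pow_le_1_antimono; [exact Hrho | lia]).
    assert ((rho ^ S K) ^ 2 <= (rho ^ K) ^ 2) by (apply pow_incr; split; [apply pow_le|]; lra).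
    assert (h ^ 2 * ((rho ^ K) ^ 2 * A) <= eps * (INR (S K) * ((rho ^ K) ^ 2 * m0))).
    { replace (h ^ 2 * ((rho ^ K) ^ 2 * A)) with ((rho ^ K) ^ 2 * (h ^ 2 * A)) by ring.
      replace (eps * (INR (S K) * ((rho ^ K) ^ 2 * m0)))
        with ((rho ^ K) ^ 2 * (eps * (INR (S K) * m0))) by ring.
      now apply Rmult_le_compat_l. }
    assert (0 <= h ^ 2) by apply pow2_ge_0.
    unfold A, m0 in *. fold (a (K * S P + P)%nat). nra.
Qed.

(** * Neumann chains and Bloch gluing *)

Definition left_diff (g : nat -> R) (y : nat -> C) (i : nat) : C :=
  match i with O => 0%C | S j => ((y i - y j) / RtoC (g j))%C end.

Definition right_diff (g : nat -> R) (y : nat -> C) (i : nat) : C :=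
  ((y i - y (S i)) / RtoC (g i))%C.

Definition chain_eq (e g : nat -> R) (y : nat -> C) (z : C) : Prop :=
  forall n, (RtoC (e n ^ 2) * (left_diff g y n + right_diff g y n))%C = (z * y n)%C.

(* [chain_eq] on [0, L) with Neumann ends: no difference is taken across [0] or [L-1]. *)
Definition segment_eq (e g : nat -> R) (L : nat) (y : nat -> C) (z : C) : Prop :=
  forall i, (i < L)%nat ->
    (RtoC (e i ^ 2) * (left_diff g y i + if (i =? pred L)%nat then 0 else right_diff g y i))%C
    = (z * y i)%C.

Lemma jacobi_eigen_of_chain e g J y z :
  is_jacobi e g J -> (forall n, e n <> 0) -> (forall n, g n <> 0) -> chain_eq e g y z ->
  forall n, J (fun k => y k / RtoC (e k))%C n = (z * (y n / RtoC (e n)))%C.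
Proof.
  intros HJ He Hg Hy n.
  assert (Hen := fun k => RtoC_neq_0 _ (He k)). assert (Hgn := fun k => RtoC_neq_0 _ (Hg k)).
  replace (z * (y n / RtoC (e n)))%C with (z * y n / RtoC (e n))%C by (field; auto).
  rewrite HJ, <- Hy. unfold jacobi_offdiag, jacobi_diag, left_diff, right_diff.
  destruct n as [|m]; push_RtoC; field; auto.
Qed.

Definition bloch (c : C) (L : nat) (y : nat -> C) (n : nat) : C := (c ^ (n / L) * y (n mod L))%C.

Lemma bloch_block c L y k i : (i < L)%nat -> bloch c L y (k * L + i) = (c ^ k * y i)%C.
Proof.
  intros Hi. unfold bloch.
  rewrite Nat.div_add_l, Nat.div_small, Nat.add_0_r by lia.
  now rewrite Nat.add_comm, Nat.Div0.mod_add, Nat.mod_small.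
Qed.

Lemma periodic_block (e : nat -> R) L : (forall n, e (n + L)%nat = e n) ->
  forall k i, e (k * L + i)%nat = e i.
Proof.
  intros He k. induction k as [|k IH]; intros i; [reflexivity|].
  now replace (S k * L + i)%nat with (k * L + i + L)%nat by lia; rewrite He.
Qed.

(* Gluing the copies [c^k y] works because the Neumann ends of the segment
   turn into vanishing differences across the seams once [c * y 0 = y (L-1)]. *)
Lemma chain_eq_bloch e g L y z c :
  (L <> 0)%nat -> (forall n, g n <> 0) ->
  (forall n, e (n + L)%nat = e n) -> (forall n, g (n + L)%nat = g n) ->
  segment_eq e g L y z -> (c * y O)%C = y (pred L) -> chain_eq e g (bloch c L y) z.
Proof.
  intros HL Hg Hpe Hpg Hy Hc n.
  assert (Hgn := fun k => RtoC_neq_0 _ (Hg k)).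
  assert (Hseam : forall k, bloch c L y (S k * L) = bloch c L y (k * L + pred L)).
  { intros k. rewrite <- (Nat.add_0_r (S k * L)), !bloch_block by lia.
    rewrite <- Hc. simpl. ring. }
  rewrite (Nat.div_mod_eq n L). set (k := (n / L)%nat). set (i := (n mod L)%nat).
  assert (Hi : (i < L)%nat) by (apply Nat.mod_upper_bound; exact HL). clearbody k i.
  assert (Hleft : left_diff g (bloch c L y) (L * k + i) = (c ^ k * left_diff g y i)%C).
  { destruct i as [|j].
    - destruct k as [|k]; [rewrite Nat.mul_0_r; simpl; ring|].
      replace (L * S k + 0)%nat with (S (k * L + pred L)) by lia. simpl left_diff.
      rewrite <- Hseam. replace (S (k * L + pred L)) with (S k * L)%nat by lia.
      unfold Cminus. rewrite Cplus_opp_r. unfold Cdiv. ring.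
    - replace (L * k + S j)%nat with (S (k * L + j)) by lia. simpl left_diff.
      replace (S (k * L + j)) with (k * L + S j)%nat by lia.
      rewrite !bloch_block, (periodic_block g L Hpg) by lia. field. auto. }
  assert (Hright : right_diff g (bloch c L y) (L * k + i)
                   = (c ^ k * if (i =? pred L)%nat then 0 else right_diff g y i)%C).
  { unfold right_diff. rewrite Nat.mul_comm, (periodic_block g L Hpg).
    destruct (Nat.eqb_spec i (pred L)) as [->|Hne].
    - replace (S (k * L + pred L)) with (S k * L)%nat by lia. rewrite Hseam.
      unfold Cminus. rewrite Cplus_opp_r. unfold Cdiv. ring.
    - replace (S (k * L + i)) with (k * L + S i)%nat by lia.
      rewrite !bloch_block by lia. field. auto. }
  rewrite Hleft, Hright, Nat.mul_comm, (periodic_block e L Hpe), bloch_block by exact Hi.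
  transitivity (c ^ k * (RtoC (e i ^ 2)
    * (left_diff g y i + if (i =? pred L)%nat then 0 else right_diff g y i)))%C; [ring|].
  rewrite Hy by exact Hi. ring.
Qed.

Lemma spectrum_of_segment e g J P y z :
  is_jacobi e g J -> (forall n, 0 < e n) -> (forall n, 0 < g n) ->
  (forall n, e (n + S P)%nat = e n) -> (forall n, g (n + S P)%nat = g n) ->
  segment_eq e g (S P) y z -> y O <> 0%C -> Cmod (y P) <= Cmod (y O) ->
  spectrum J z.
Proof.
  intros HJ He Hg Hpe Hpg Hy Hy0 Hmod.
  assert (He0 : forall n, e n <> 0) by (intros n; specialize (He n); lra).
  assert (Hg0 : forall n, g n <> 0) by (intros n; specialize (Hg n); lra).
  set (c := (y P / y O)%C).
  assert (Hc : (c * y O)%C = y P) by (unfold c; field; exact Hy0).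
  set (u := fun n => (bloch c (S P) y n / RtoC (e n))%C).
  assert (Hu := jacobi_eigen_of_chain _ _ _ _ _ HJ He0 Hg0
                  (chain_eq_bloch e g (S P) y z c (Nat.neq_succ_0 P) Hg0 Hpe Hpg Hy Hc)).
  apply (spectrum_of_truncations _ _ _ _ u HJ Hu).
  assert (Hfirst : forall i, (i <= P)%nat -> u i = (y i / RtoC (e i))%C).
  { intros i Hi. unfold u. pose proof (bloch_block c (S P) y 0 i) as E. simpl in E.
    rewrite E by lia. now rewrite Cmult_1_l. }
  assert (Hblock : forall k i, (i <= P)%nat -> u (k * S P + i)%nat = (c ^ k * u i)%C).
  { intros k i Hi. unfold u at 1. rewrite (periodic_block e (S P) Hpe), bloch_block, Hfirst by lia.
    field. apply RtoC_neq_0, He0. }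
  intros eps Heps.
  destruct (geometric_truncation_small u c P (jacobi_offdiag e g P) eps) as [K HK]; auto.
  - unfold c. rewrite Cmod_div by exact Hy0.
    apply (Rdiv_le_1 _ _ (proj1 (Cmod_gt_0 _) Hy0)), Hmod.
  - rewrite Hfirst by lia. intros E. apply Hy0.
    apply (f_equal (fun t => t * RtoC (e O))%C) in E.
    rewrite Cmult_0_l in E. rewrite <- E. field. apply RtoC_neq_0, He0.
  - exists (K * S P + P)%nat.
    replace (jacobi_offdiag e g (K * S P + P)) with (jacobi_offdiag e g P); [exact HK|].
    unfold jacobi_offdiag. replace (S (K * S P + P)) with (S K * S P + 0)%nat by lia.
    now rewrite !(periodic_block _ _ Hpe), (periodic_block _ _ Hpg), <- (Hpe O).
Qed.

Lemma spectrum_constant_jacobi e g J a b :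
  (forall n, e n = a) -> (forall n, g n = b) -> 0 < a -> 0 < b ->
  is_jacobi e g J -> spectrum J (RtoC (a ^ 2 / b)).
Proof.
  intros He Hg Ha Hb HJ.
  assert (Hb0 : b <> 0) by lra.
  (* (1, 0, -1) solves the Neumann problem on three equal resonators. *)
  set (y := fun k : nat => match k with O => RtoC 1 | 1%nat => RtoC 0 | _ => RtoC (-1) end).
  apply (spectrum_of_segment e g J 2 y); auto.
  - intros n. rewrite He. lra.
  - intros n. rewrite Hg. lra.
  - intros n. now rewrite !He.
  - intros n. now rewrite !Hg.
  - intros i Hi. destruct i as [|[|[|i]]]; try lia;
      unfold left_diff, right_diff, y; rewrite ?He, ?Hg; cbn [Nat.eqb pred];
      push_RtoC; field; now apply RtoC_neq_0.
  - apply RtoC_neq_0. lra.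
  - unfold y. rewrite !Cmod_R. unfold Rabs. repeat destruct Rcase_abs; lra.
Qed.

Lemma segment_eq_ext e g e' g' L y z :
  (forall i, (i < L)%nat -> e i = e' i) -> (forall i, (S i < L)%nat -> g i = g' i) ->
  segment_eq e g L y z -> segment_eq e' g' L y z.
Proof.
  intros He Hg Hy i Hi. rewrite <- He, <- (Hy i Hi) by exact Hi. do 2 f_equal.
  - destruct i as [|j]; [reflexivity|]. simpl. now rewrite Hg by lia.
  - destruct (Nat.eqb_spec i (pred L)); [reflexivity|]. unfold right_diff. now rewrite Hg by lia.
Qed.

Lemma segment_eq_rev e g L y z :
  segment_eq e g L y z ->
  segment_eq (fun i => e (L - 1 - i)%nat) (fun i => g (L - 2 - i)%nat) L
             (fun i => y (L - 1 - i)%nat) z.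
Proof.
  intros Hy i Hi. rewrite <- (Hy (L - 1 - i)%nat) by lia. f_equal.
  rewrite Cplus_comm. f_equal.
  - destruct (Nat.eqb_spec i (pred L)) as [E|E].
    + now replace (L - 1 - i)%nat with O by lia.
    + replace (L - 1 - i)%nat with (S (L - 2 - i)) by lia. unfold right_diff. simpl.
      replace (L - 1 - S i)%nat with (L - 2 - i)%nat by lia.
      now replace (S (L - 2 - i)) with (L - 1 - i)%nat by lia.
  - destruct i as [|i].
    + now rewrite Nat.sub_0_r, (proj2 (Nat.eqb_eq (L - 1) (pred L))) by lia.
    + rewrite (proj2 (Nat.eqb_neq _ _)) by lia. unfold right_diff. simpl.
      now replace (S (L - 1 - S i)) with (L - 1 - i)%nat by lia;
        replace (L - 1 - S i)%nat with (L - 2 - i)%nat by lia.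
Qed.

Lemma segment_eq_zero e g L y z :
  (forall n, e n <> 0) -> (forall n, g n <> 0) ->
  segment_eq e g L y z -> y O = 0%C -> forall i, (i < L)%nat -> y i = 0%C.
Proof.
  intros He Hg Hy Hy0 i Hi.
  enough (H : forall j, (j <= i)%nat -> y j = 0%C) by (apply H; lia).
  induction i as [|i IH]; intros j Hj; [now replace j with O by lia|].
  assert (Hprev : forall j, (j <= i)%nat -> y j = 0%C) by (apply IH; lia).
  destruct (Nat.eq_dec j (S i)) as [->|Hne]; [|apply Hprev; lia].
  assert (Hrow := Hy i ltac:(lia)).
  assert (Hleft : left_diff g y i = 0%C).
  { destruct i as [|k]; [reflexivity|]. simpl. rewrite !Hprev by lia. unfold Cdiv; ring. }
  unfold right_diff at 1 in Hrow.
  rewrite (proj2 (Nat.eqb_neq i (pred L))), Hleft, (Hprev i) in Hrow by lia.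
  assert (Hen := RtoC_neq_0 _ (pow_nonzero _ 2 (He i))). assert (Hgn := RtoC_neq_0 _ (Hg i)).
  replace (y (S i)) with
    (- (RtoC (e i ^ 2) * (0 + (0 - y (S i)) / RtoC (g i))) * RtoC (g i) / RtoC (e i ^ 2))%C
    by (field; auto).
  rewrite Hrow. unfold Cdiv; ring.
Qed.

(** * The operators J_+ and J_- *)

Definition sqrtV (q : res) : R := rv q / sqrt (rl q).

Lemma sqrtV_pos q : pos_res q -> 0 < sqrtV q.
Proof. intros (Hv & Hl & _). apply Rdiv_lt_0_compat; [exact Hv | now apply sqrt_lt_R0]. Qed.

Lemma sqrtV_sq q : pos_res q -> sqrtV q ^ 2 = rv q ^ 2 / rl q.
Proof.
  intros (_ & Hl & _). unfold sqrtV. assert (0 < sqrt (rl q)) by now apply sqrt_lt_R0.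
  rewrite <- (sqrt_sqrt (rl q)) at 2 by lra. field. lra.
Qed.

Lemma coef_a_sqrtV r i : pos_res (r i) -> pos_res (r (i + 1)%Z) ->
  coef_a r i = - (sqrtV (r i) * sqrtV (r (i + 1)%Z)) / rs (r i).
Proof.
  intros (_ & Hl & Hs) (_ & Hl' & _). unfold coef_a, sqrtV.
  assert (0 < sqrt (rl (r i))) by now apply sqrt_lt_R0.
  assert (0 < sqrt (rl (r (i + 1)%Z))) by now apply sqrt_lt_R0.
  rewrite sqrt_mult by lra. field. lra.
Qed.

Lemma coef_b_sqrtV r i : pos_res (r i) ->
  coef_b r i = sqrtV (r i) ^ 2 * (1 / rs (r (i - 1)%Z) + 1 / rs (r i)).
Proof. intros Hr. unfold coef_b. now rewrite sqrtV_sq. Qed.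

Lemma boundary_coef_sqrtV q s : pos_res q -> 0 < s -> rv q ^ 2 / (rl q * s) = sqrtV q ^ 2 / s.
Proof. intros Hq Hs. rewrite sqrtV_sq by exact Hq. destruct Hq as (_ & Hl & _). field. lra. Qed.

Lemma Jplus_jacobi B chi :
  (forall i, (0 <= i)%Z -> pos_res (plus_res B chi i)) ->
  is_jacobi (fun n => sqrtV (plus_res B chi (Z.of_nat n)))
            (fun n => rs (plus_res B chi (Z.of_nat n))) (Jplus B chi).
Proof.
  intros Hp x [|m]; unfold Jplus, jacobi_offdiag, jacobi_diag; cbv zeta.
  - rewrite coef_a_sqrtV, boundary_coef_sqrtV by (apply Hp; lia). simpl. ring.
  - rewrite !coef_a_sqrtV, coef_b_sqrtV by (apply Hp; lia).
    replace (Z.of_nat (S m) - 1)%Z with (Z.of_nat m) by lia.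
    replace (Z.of_nat m + 1)%Z with (Z.of_nat (S m)) by lia.
    replace (Z.of_nat (S m) + 1)%Z with (Z.of_nat (S (S m))) by lia.
    ring.
Qed.

(* J_- is read on n = -i-1, so the spacing between sites n and n+1 is that of the
   resonator at site n+1. *)
Lemma Jminus_jacobi B chi :
  (forall i, (i < 0)%Z -> pos_res (minus_res B chi i)) ->
  is_jacobi (fun n => sqrtV (minus_res B chi (- Z.of_nat n - 1)))
            (fun n => rs (minus_res B chi (- Z.of_nat (S n) - 1))) (Jminus B chi).
Proof.
  intros Hp x [|m]; unfold Jminus, jacobi_offdiag, jacobi_diag; cbv zeta.
  - rewrite coef_a_sqrtV, boundary_coef_sqrtV by (apply Hp; lia).
    rewrite (Rmult_comm (sqrtV (minus_res B chi (-2)))). simpl. ring.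
  - rewrite !coef_a_sqrtV, coef_b_sqrtV by (apply Hp; lia).
    replace (- Z.of_nat (S m) - 1 - 1)%Z with (- Z.of_nat (S (S m)) - 1)%Z by lia.
    replace (- Z.of_nat (S (S m)) - 1 + 1)%Z with (- Z.of_nat (S m) - 1)%Z by lia.
    replace (- Z.of_nat (S m) - 1 + 1)%Z with (- Z.of_nat m - 1)%Z by lia.
    set (r0 := minus_res B chi (- Z.of_nat m - 1)).
    set (r1 := minus_res B chi (- Z.of_nat (S m) - 1)).
    set (r2 := minus_res B chi (- Z.of_nat (S (S m)) - 1)).
    rewrite (Rmult_comm (sqrtV r2)), (Rmult_comm (sqrtV r1) (sqrtV r0)), (Rplus_comm (1 / rs r2)).
    ring.
Qed.

Definition periodic_ext (P : list nat) (k : nat) : nat := nth (k mod length P) P O.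

Lemma periodic_ext_In P k : P <> nil -> In (periodic_ext P k) P.
Proof.
  intros HP. apply nth_In, Nat.mod_upper_bound.
  now destruct P.
Qed.

Lemma periodic_ext_range D P :
  P <> nil -> List.Forall (fun d => (1 <= d <= D)%nat) P ->
  forall k, (1 <= periodic_ext P k <= D)%nat.
Proof. intros HP HD k. rewrite List.Forall_forall in HD. apply HD, periodic_ext_In, HP. Qed.

Lemma mod_add_self n m : ((n + m) mod m = n mod m)%nat.
Proof. rewrite <- (Nat.mul_1_l m) at 1. apply Nat.Div0.mod_add. Qed.

Lemma flat_map_map {A B D : Type} (f : B -> list D) (g : A -> B) l :
  flat_map f (map g l) = flat_map (fun x => f (g x)) l.
Proof. rewrite !flat_map_concat_map, map_map. reflexivity. Qed.

Lemma flat_map_rev {A B : Type} (f : A -> list B) l :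
  flat_map (fun x => rev (f x)) (rev l) = rev (flat_map f l).
Proof.
  induction l as [|a l IH]; [reflexivity|].
  simpl. rewrite flat_map_app, IH, rev_app_distr. simpl. now rewrite app_nil_r.
Qed.

Lemma length_flat_map_seq_ge {B : Type} (f : nat -> list B) s k :
  (forall j, f j <> nil) -> (k <= length (flat_map f (seq s k)))%nat.
Proof.
  intros Hf. revert s. induction k as [|k IH]; intros s; [lia|].
  simpl. rewrite length_app. specialize (IH (S s)).
  destruct (f s) eqn:E; [now destruct (Hf s)|]. simpl. lia.
Qed.

Section PeriodicArrangement.

Variables (F : nat -> list res) (P : list nat).
Hypothesis HP : P <> nil.
Hypothesis HF : forall d, In d P -> F d <> nil.

Let chi := periodic_ext P.
Let arr := flat_map F P.

Lemma map_periodic_ext_block s : map chi (seq (s * length P) (length P)) = P.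
Proof.
  apply nth_ext with (d := O) (d' := O); [now rewrite length_map, length_seq|].
  intros i Hi. rewrite length_map, length_seq in Hi.
  rewrite (nth_indep _ _ (chi O)) by now rewrite length_map, length_seq.
  rewrite map_nth, seq_nth by exact Hi. unfold chi, periodic_ext.
  now rewrite Nat.add_comm, Nat.Div0.mod_add, Nat.mod_small.
Qed.

Lemma flat_map_periodic_prefix K :
  flat_map (fun j => F (chi j)) (seq 0 (K * length P)) = concat (repeat arr K).
Proof.
  induction K as [|K IH]; [reflexivity|].
  replace (S K * length P)%nat with (K * length P + length P)%nat by lia.
  rewrite seq_app, flat_map_app, IH, Nat.add_0_l, <- (flat_map_map F chi), map_periodic_ext_block.
  replace (S K) with (K + 1)%nat by lia.
  rewrite repeat_app, concat_app. simpl. now rewrite app_nil_r.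
Qed.

Lemma nth_concat_repeat K n :
  (n < K * length arr)%nat -> nth n (concat (repeat arr K)) res0 = nth (n mod length arr) arr res0.
Proof.
  assert (Hlen : forall k, length (concat (repeat arr k)) = (k * length arr)%nat).
  { induction k as [|k IHk]; [reflexivity|]. simpl. rewrite length_app, IHk. lia. }
  induction K as [|K IH]; intros Hn; [lia|].
  replace (S K) with (K + 1)%nat by lia.
  rewrite repeat_app, concat_app. simpl concat. rewrite app_nil_r.
  destruct (Nat.lt_ge_cases n (K * length arr)) as [Hlt|Hge].
  - rewrite app_nth1 by (rewrite Hlen; lia). apply IH. exact Hlt.
  - rewrite app_nth2 by (rewrite Hlen; lia). rewrite Hlen.
    replace n with ((n - K * length arr) + K * length arr)%nat at 2 by lia.
    rewrite Nat.Div0.mod_add, Nat.mod_small by (simpl in Hn; lia). reflexivity.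
Qed.

Lemma length_flat_map_pos : (1 <= length arr)%nat.
Proof.
  destruct P as [|d P']; [contradiction|]. unfold arr. simpl. rewrite length_app.
  destruct (F d) eqn:E; [now destruct (HF d (or_introl eq_refl))|]. simpl. lia.
Qed.

Lemma nth_flat_map_periodic n :
  nth n (flat_map (fun j => F (chi j)) (seq 0 (S n))) res0 = nth (n mod length arr) arr res0.
Proof.
  assert (HM : (1 <= length P)%nat) by (destruct P; [contradiction | simpl; lia]).
  assert (Hchi : forall j, F (chi j) <> nil) by (intros j; apply HF, periodic_ext_In, HP).
  assert (Harr := length_flat_map_pos).
  replace (S n * length P)%nat with (S n + (S n * length P - S n))%nat by nia.
  rewrite <- (app_nth1 _ (flat_map (fun j => F (chi j)) (seq (S n) (S n * length P - S n)))).
  2: { pose proof (length_flat_map_seq_ge _ 0 (S n) Hchi). lia. }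
  rewrite <- flat_map_app, <- seq_app.
  replace (S n + (S n * length P - S n))%nat with (S n * length P)%nat by nia.
  rewrite flat_map_periodic_prefix. apply nth_concat_repeat. nia.
Qed.

End PeriodicArrangement.

Lemma plus_res_periodic B P n :
  P <> nil -> (forall d, In d P -> B d <> nil) ->
  plus_res B (periodic_ext P) (Z.of_nat n)
  = nth (n mod length (flat_map B P)) (flat_map B P) res0.
Proof. intros HP HB. unfold plus_res. rewrite Nat2Z.id. now apply nth_flat_map_periodic. Qed.

Lemma minus_res_periodic B P n :
  P <> nil -> (forall d, In d P -> B d <> nil) ->
  minus_res B (periodic_ext (rev P)) (- Z.of_nat n - 1)
  = nth (length (flat_map B P) - S (n mod length (flat_map B P))) (flat_map B P) res0.
Proof.
  intros HP HB. unfold minus_res.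
  replace (Z.to_nat (- (- Z.of_nat n - 1) - 1)) with n by lia.
  rewrite (nth_flat_map_periodic (fun d => rev (B d)) (rev P)).
  - rewrite flat_map_rev, length_rev. apply rev_nth, Nat.mod_upper_bound.
    pose proof (length_flat_map_pos B P HP HB). lia.
  - intros E. apply HP, rev_inj. exact E.
  - intros d Hd E. apply (HB d); [now apply in_rev|]. apply rev_inj. exact E.
Qed.

(** * The capacitance matrix *)

Lemma resF_S arr k : resF arr (S k) = nth k arr res0.
Proof. unfold resF. simpl. now rewrite Nat.sub_0_r. Qed.

Lemma VCmat_diag arr i j :
  (1 <= i <= length arr)%nat -> VCmat arr i j = Vmat arr i i * Cmat arr i j.
Proof.
  intros Hi. unfold VCmat.
  rewrite (sum_n_m_three_point _ i) by (exact Hi || (intros k _ Hk _; unfold Vmat;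
    rewrite (proj2 (Nat.eqb_neq i k)) by congruence; now rewrite Rmult_0_l)).
  unfold Vmat.
  rewrite Nat.eqb_refl, (proj2 (Nat.eqb_neq i (pred i))), (proj2 (Nat.eqb_neq i (S i))) by lia.
  unfold plus, zero; simpl. destruct (i =? 1)%nat, (i =? length arr)%nat; ring.
Qed.

Lemma Cmat_far arr i j : j <> i -> j <> S i -> i <> S j -> Cmat arr i j = 0.
Proof.
  intros H1 H2 H3. unfold Cmat.
  now rewrite (proj2 (Nat.eqb_neq i j)), (proj2 (Nat.eqb_neq j (S i))),
    (proj2 (Nat.eqb_neq i (S j))) by congruence.
Qed.

Lemma Cmat_sub arr k : Cmat arr (S (S k)) (S k) = - (1 / rs (nth k arr res0)).
Proof.
  unfold Cmat.
  rewrite (proj2 (Nat.eqb_neq (S (S k)) (S k))), (proj2 (Nat.eqb_neq (S k) (S (S (S k))))),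
    Nat.eqb_refl, resF_S by lia.
  reflexivity.
Qed.

Lemma Cmat_super arr k : Cmat arr (S k) (S (S k)) = - (1 / rs (nth k arr res0)).
Proof.
  unfold Cmat. rewrite (proj2 (Nat.eqb_neq (S k) (S (S k)))), Nat.eqb_refl, resF_S by lia.
  reflexivity.
Qed.

Lemma Cmat_diag arr k : (2 <= length arr)%nat -> (k < length arr)%nat ->
  Cmat arr (S k) (S k)
  = (if (k =? 0)%nat then 0 else 1 / rs (nth (pred k) arr res0))
    + (if (k =? pred (length arr))%nat then 0 else 1 / rs (nth k arr res0)).
Proof.
  intros HN Hk. unfold Cmat. cbv zeta. rewrite Nat.eqb_refl.
  destruct k as [|k].
  - rewrite (proj2 (Nat.eqb_neq 0 (pred (length arr)))), resF_S by lia. cbn [Nat.eqb]. ring.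
  - rewrite (proj2 (Nat.eqb_neq (S (S k)) 1)), (proj2 (Nat.eqb_neq (S k) 0)) by lia.
    change (pred (S k)) with k.
    destruct (Nat.eqb_spec (S (S k)) (length arr)) as [E|E].
    + rewrite (proj2 (Nat.eqb_eq (S k) (pred (length arr)))) by lia.
      replace (length arr - 1)%nat with (S k) by lia. rewrite resF_S. ring.
    + rewrite (proj2 (Nat.eqb_neq (S k) (pred (length arr)))) by lia.
      replace (S (S k) - 1)%nat with (S k) by lia. now rewrite !resF_S.
Qed.

(* Row [k+1] of V C: the diagonal entries of C are exactly the coefficients of the
   differences to the neighbours that exist. *)
Lemma VCmat_row arr (x : nat -> C) k :
  (2 <= length arr)%nat -> (k < length arr)%nat ->
  (forall m, rs (nth m arr res0) <> 0) ->
  sum_n_m (fun j => (RtoC (VCmat arr (S k) j) * x j)%C) 1 (length arr)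
  = (RtoC (rv (nth k arr res0) ^ 2 / rl (nth k arr res0))
     * (left_diff (fun m => rs (nth m arr res0)) (fun m => x (S m)) k
        + if (k =? pred (length arr))%nat then 0
          else right_diff (fun m => rs (nth m arr res0)) (fun m => x (S m)) k))%C.
Proof.
  intros HN Hk Hs.
  assert (Hsn := fun m => RtoC_neq_0 _ (Hs m)).
  rewrite (sum_n_m_three_point _ (S k)).
  2: lia.
  2: { intros j H1 H2 H3. rewrite VCmat_diag, Cmat_far, Rmult_0_r by lia. apply Cmult_0_l. }
  rewrite !VCmat_diag by lia. unfold Vmat. rewrite Nat.eqb_refl, resF_S.
  set (v := rv (nth k arr res0) ^ 2 / rl (nth k arr res0)).
  repeat match goal with |- context [@plus ?G ?a ?b] => change (@plus G a b) with (Cplus a b) end.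
  change zero with (RtoC 0). match goal with |- ?a = ?b => change (@eq C a b) end.
  unfold right_diff. destruct k as [|k].
  - rewrite (proj2 (Nat.eqb_neq 1 (length arr))), Cmat_super, Cmat_diag,
      (proj2 (Nat.eqb_neq 0 (pred (length arr)))) by lia.
    cbn [Nat.eqb left_diff].
    push_RtoC. field. auto.
  - rewrite (proj2 (Nat.eqb_neq (S (S k)) 1)), Cmat_diag, (proj2 (Nat.eqb_neq (S k) 0)) by lia.
    change (pred (S (S k))) with (S k). change (pred (S k)) with k.
    rewrite Cmat_sub. unfold left_diff.
    destruct (Nat.eqb_spec (S (S k)) (length arr)) as [E|E].
    + rewrite (proj2 (Nat.eqb_eq (S k) (pred (length arr)))) by lia.
      push_RtoC. field. auto.
    + rewrite (proj2 (Nat.eqb_neq (S k) (pred (length arr)))), Cmat_super by lia.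
      push_RtoC. field. auto.
Qed.

Lemma segment_eq_of_eigenvector arr (x : nat -> C) z :
  (2 <= length arr)%nat -> (forall k, pos_res (nth k arr res0)) ->
  (forall i, (1 <= i <= length arr)%nat ->
     sum_n_m (fun j => (RtoC (VCmat arr i j) * x j)%C) 1 (length arr) = (z * x i)%C) ->
  segment_eq (fun k => sqrtV (nth k arr res0)) (fun k => rs (nth k arr res0))
             (length arr) (fun k => x (S k)) z.
Proof.
  intros HN Hpos Heq i Hi.
  assert (Hs : forall m, rs (nth m arr res0) <> 0)
    by (intros m; destruct (Hpos m) as (_ & _ & H); lra).
  rewrite <- (Heq (S i)), VCmat_row, sqrtV_sq by (auto || lia). reflexivity.
Qed.

Lemma eigenvalue_single arr (x : nat -> C) z :
  length arr = 1%nat -> pos_res (nth 0 arr res0) -> x 1%nat <> 0%C ->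
  sum_n_m (fun j => (RtoC (VCmat arr 1 j) * x j)%C) 1 (length arr) = (z * x 1%nat)%C ->
  z = RtoC (sqrtV (nth 0 arr res0) ^ 2 / rs (nth 0 arr res0)).
Proof.
  intros HN Hpos Hx Heq. rewrite HN, sum_n_n, VCmat_diag in Heq by lia.
  unfold Vmat, Cmat in Heq. cbv zeta in Heq. rewrite Nat.eqb_refl, resF_S in Heq.
  transitivity (z * x 1%nat / x 1%nat)%C; [field; exact Hx|].
  rewrite <- Heq, sqrtV_sq by exact Hpos.
  replace (rv (nth 0 arr res0) ^ 2 / rl (nth 0 arr res0) * (1 / rs (nth 0 arr res0)))
    with (rv (nth 0 arr res0) ^ 2 / rl (nth 0 arr res0) / rs (nth 0 arr res0))
    by (unfold Rdiv; ring).
  field. exact Hx.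
Qed.

Section PeriodicExtensions.

Variables (D : nat) (B : nat -> list res) (chiM : list nat).
Hypothesis HB : valid_blocks D B.
Hypothesis HchiM : List.Forall (fun d => (1 <= d <= D)%nat) chiM.
Hypothesis HchiM_nil : chiM <> nil.

Local Notation arr := (flat_map B chiM).
Local Notation N := (length arr).

Lemma blocks_nonempty d : In d chiM -> B d <> nil.
Proof. intros Hd. rewrite List.Forall_forall in HchiM. exact (proj1 (HB d (HchiM d Hd))). Qed.

Lemma array_pos k : pos_res (nth k arr res0).
Proof.
  destruct (Nat.lt_ge_cases k N) as [Hk|Hk].
  - pose proof (nth_In arr res0 Hk) as Hin. apply in_flat_map in Hin as (d & Hd & Hin).
    rewrite List.Forall_forall in HchiM.
    destruct (HB d (HchiM d Hd)) as [_ Hpos]. rewrite List.Forall_forall in Hpos. now apply Hpos.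
  - rewrite nth_overflow by exact Hk. unfold pos_res, res0, rv, rl, rs. simpl. lra.
Qed.

Lemma array_length_pos : (1 <= N)%nat.
Proof. exact (length_flat_map_pos B chiM HchiM_nil blocks_nonempty). Qed.

Lemma spectrum_Jplus_of_segment y z :
  segment_eq (fun k => sqrtV (nth k arr res0)) (fun k => rs (nth k arr res0)) N y z ->
  y O <> 0%C -> Cmod (y (pred N)) <= Cmod (y O) ->
  spectrum (Jplus B (periodic_ext chiM)) z.
Proof.
  intros Hy Hy0 Hmod. assert (HN := array_length_pos).
  assert (Hform : forall n, plus_res B (periodic_ext chiM) (Z.of_nat n) = nth (n mod N) arr res0)
    by (intros n; now apply plus_res_periodic; [|apply blocks_nonempty]).
  assert (Hper : S (pred N) = N) by lia.
  apply (spectrum_of_segment (fun n => sqrtV (plus_res B (periodic_ext chiM) (Z.of_nat n)))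
           (fun n => rs (plus_res B (periodic_ext chiM) (Z.of_nat n))) _ (pred N) y z);
    try rewrite Hper; try assumption.
  - apply Jplus_jacobi. intros i Hi. rewrite <- (Z2Nat.id i Hi), Hform. apply array_pos.
  - intros n. rewrite Hform. apply sqrtV_pos, array_pos.
  - intros n. rewrite Hform. apply array_pos.
  - intros n. now rewrite !Hform, mod_add_self.
  - intros n. now rewrite !Hform, mod_add_self.
  - eapply segment_eq_ext; [| |exact Hy]; intros i Hi; now rewrite Hform, Nat.mod_small by lia.
Qed.

Lemma spectrum_Jminus_of_segment y z :
  segment_eq (fun k => sqrtV (nth k arr res0)) (fun k => rs (nth k arr res0)) N y z ->
  y (pred N) <> 0%C -> Cmod (y O) <= Cmod (y (pred N)) ->
  spectrum (Jminus B (periodic_ext (rev chiM))) z.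
Proof.
  intros Hy Hy0 Hmod. assert (HN := array_length_pos).
  assert (Hform : forall n, minus_res B (periodic_ext (rev chiM)) (- Z.of_nat n - 1)
                            = nth (N - S (n mod N)) arr res0)
    by (intros n; now apply minus_res_periodic; [|apply blocks_nonempty]).
  assert (Hper : S (pred N) = N) by lia.
  apply (spectrum_of_segment
           (fun n => sqrtV (minus_res B (periodic_ext (rev chiM)) (- Z.of_nat n - 1)))
           (fun n => rs (minus_res B (periodic_ext (rev chiM)) (- Z.of_nat (S n) - 1)))
           _ (pred N) (fun i => y (N - 1 - i)%nat) z); try rewrite Hper; try assumption.
  - apply Jminus_jacobi. intros i Hi.
    replace i with (- Z.of_nat (Z.to_nat (- i - 1)) - 1)%Z by lia. rewrite Hform. apply array_pos.
  - intros n. rewrite Hform. apply sqrtV_pos, array_pos.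
  - intros n. rewrite Hform. apply array_pos.
  - intros n. now rewrite !Hform, mod_add_self.
  - intros n. replace (S (n + N)) with (S n + N)%nat by lia. now rewrite !Hform, mod_add_self.
  - eapply segment_eq_ext; [| |exact (segment_eq_rev _ _ _ _ _ Hy)]; intros i Hi;
      rewrite Hform, Nat.mod_small by lia; do 2 f_equal; lia.
  - now replace (N - 1 - 0)%nat with (pred N) by lia.
  - now replace (N - 1 - 0)%nat with (pred N) by lia; replace (N - 1 - pred N)%nat with O by lia.
Qed.

Lemma Sigma_single :
  N = 1%nat -> Sigma D B (RtoC (sqrtV (nth 0 arr res0) ^ 2 / rs (nth 0 arr res0))).
Proof.
  intros HN1. exists (periodic_ext chiM).
  split; [exact (periodic_ext_range D chiM HchiM_nil HchiM)|]. left.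
  assert (Hform : forall n, plus_res B (periodic_ext chiM) (Z.of_nat n) = nth 0 arr res0).
  { intros n. rewrite plus_res_periodic, HN1, Nat.mod_1_r; [reflexivity | exact HchiM_nil |].
    exact blocks_nonempty. }
  apply (spectrum_constant_jacobi _ _ _ _ _
           (fun n => f_equal sqrtV (Hform n)) (fun n => f_equal rs (Hform n))).
  - apply sqrtV_pos, array_pos.
  - apply array_pos.
  - apply Jplus_jacobi. intros i Hi. rewrite <- (Z2Nat.id i Hi), Hform. apply array_pos.
Qed.

Lemma Sigma_of_segment y z :
  segment_eq (fun k => sqrtV (nth k arr res0)) (fun k => rs (nth k arr res0)) N y z ->
  (exists i, (i < N)%nat /\ y i <> 0%C) -> Sigma D B z.
Proof.
  intros Hy (i & Hi & Hyi).
  destruct (Rle_dec (Cmod (y (pred N))) (Cmod (y O))) as [Hle|Hgt].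
  - exists (periodic_ext chiM). split; [exact (periodic_ext_range D chiM HchiM_nil HchiM)|].
    left. apply (spectrum_Jplus_of_segment y z Hy); [|exact Hle].
    intros Hy0. apply Hyi. refine (segment_eq_zero _ _ _ _ _ _ _ Hy Hy0 i Hi); intros k.
    + apply Rgt_not_eq, sqrtV_pos, array_pos.
    + apply Rgt_not_eq, array_pos.
  - exists (periodic_ext (rev chiM)).
    split; [apply periodic_ext_range; [|apply Forall_rev, HchiM]|].
    { intros E. apply HchiM_nil, (rev_inj chiM nil E). }
    right. apply (spectrum_Jminus_of_segment y z Hy); [|lra].
    intros E. apply Hgt. rewrite E, Cmod_0. apply Cmod_ge_0.
Qed.

End PeriodicExtensions.

Theorem theorem4p7 :
  forall (D : nat) (B : nat -> list res),
    valid_blocks D B ->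
    forall chiM : list nat,
      List.Forall (fun d => (1 <= d <= D)%nat) chiM ->
      forall z : C,
        eigenvalue_VC (finite_array B chiM) z ->
        Sigma D B z.
Proof.
  intros D B HB chiM HchiM z [x [[i0 [Hi0 Hx]] Heq]].
  unfold finite_array in *.
  assert (Hnil : chiM <> nil) by (intros ->; simpl in Hi0; lia).
  assert (Hpos := array_pos D B chiM HB HchiM).
  destruct (Nat.eq_dec (length (flat_map B chiM)) 1) as [HN1|HN2].
  - replace i0 with 1%nat in Hx by lia.
    rewrite (eigenvalue_single _ x z HN1 (Hpos 0%nat) Hx (Heq 1%nat ltac:(lia))).
    exact (Sigma_single D B chiM HB HchiM Hnil HN1).
  - apply (Sigma_of_segment D B chiM HB HchiM Hnil (fun k => x (S k))).
    + exact (segment_eq_of_eigenvector (flat_map B chiM) x z ltac:(lia) Hpos Heq).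
    + exists (i0 - 1)%nat. split; [lia|]. now replace (S (i0 - 1)) with i0 by lia.
Qed.
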